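(* Let $\mathbb{H}$ be an $r$-uniform simple hypergraph of diameter two with maximum degree $\Delta$. Then $\lambda(\mathbb{H})\le\big((r-1)\Delta\big)^2$.
   Context: Distances in a hypergraph $\mathbb{H}=(V,E)$ are taken in its $2$-section, the graph on $V$ in which distinct vertices are adjacent iff they lie in a common edge; the diameter is the maximum distance between two vertices. The degree of a vertex is the number of edges containing it. An $L(2,1)$-colouring of $\mathbb{H}$ is a map $f:V\to\mathbb{Z}_{\ge 0}$ such that $|f(u)-f(v)|\ge 2$ whenever $u\ne v$ lie in a common edge, and $|f(u)-f(v)|\ge 1$ whenever there are edges $e_1\ni v$, $e_2\ni u$ with $(e_1\cap e_2)\setminus\{u,v\}\ne\emptyset$. Its span is $\max f-\min f$, and $\lambda(\mathbb{H})$ is the minimum span. *)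

(* A hypergraph is a finite vertex type V with an edge set
   E : {set {set V}} (a set of edges, so no repeated edges: simple). *)
From mathcomp Require Import all_boot.
Set Implicit Arguments. Unset Strict Implicit. Unset Printing Implicit Defensive.

Section Hyper.
Variables (V : finType) (E : {set {set V}}).

Definition uniform (r : nat) : Prop := forall e, e \in E -> #|e| = r.

Definition adj : rel V := fun u v => (u != v) && [exists e in E, (u \in e) && (v \in e)].

Definition dist_le (k : nat) (u v : V) : Prop :=
  exists p : seq V, [/\ size p <= k, path adj u p & last u p = v].

Definition diameter_eq (d : nat) : Prop :=
  (forall u v, dist_le d u v) /\
  (exists u v, dist_le d u v /\ ~ dist_le d.-1 u v /\ 0 < d).

Definition degree (v : V) : nat := #|[set e in E | v \in e]|.
Definition max_degree : nat := \max_(v : V) degree v.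

Definition L21_colouring (f : V -> nat) : Prop :=
  (forall u v e, e \in E -> u \in e -> v \in e -> u != v ->
     (f u + 2 <= f v) || (f v + 2 <= f u)) /\
  (forall u v e1 e2, e1 \in E -> e2 \in E -> v \in e1 -> u \in e2 ->
     u != v -> (exists w, [/\ w \in e1, w \in e2, w != u & w != v]) ->
     f u != f v).

Definition fmax (f : V -> nat) : nat := \max_(v : V) f v.
Definition fmin (f : V -> nat) : nat := \big[minn/fmax f]_(v : V) f v.
Definition span (f : V -> nat) : nat := fmax f - fmin f.

Definition lambda_le (b : nat) : Prop :=
  exists f : V -> nat, L21_colouring f /\ span f <= b.
End Hyper.

From mathcomp Require Import all_boot zify.
Set Implicit Arguments. Unset Strict Implicit. Unset Printing Implicit Defensive.

(* Order the vertices as v_0, ..., v_(n-1) and give v_i the colour i plus the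
   number of breaks before it, a break being a pair v_j, v_(j+1) adjacent in the
   2-section.  Adjacent vertices then get colours at least 2 apart and distinct
   vertices distinct colours, so the span is n - 1 plus the number of breaks.
   An ordering is a concatenation of paths of the complement of the 2-section;
   we grow one path greedily, extending it at either end or after reversing the
   tail behind a non-neighbour of its last vertex, and accept a break only when
   all of this fails.  Each failure forces high degrees: with D the maximum
   degree of the 2-section (at most (r-1)Delta), at most D vertices remain and
   n + [the path ends in a break] <= 2D.  So there is no break when n > 2D, and
   then n - 1 <= D^2 by the Moore bound; otherwise there are at most D breaks,
   and at most D - 1 when n = 2D, giving a span of at most 3D - 2 <= D^2. *)

Section Breaks.
Variables (V : eqType) (g : rel V).

Definition break_seq (s : seq V) : seq bool :=
  if s is x :: t then pairmap g x t else [::].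
Definition breaks (s : seq V) : nat := count id (break_seq s).
Definition ends_in_break (s : seq V) : bool := last false (break_seq s).

Lemma size_break_seq s : size (break_seq s) = (size s).-1.
Proof. by case: s => //= x t; rewrite size_pairmap. Qed.

Lemma nth_break_seq x0 s i : i.+1 < size s ->
  nth false (break_seq s) i = g (nth x0 s i) (nth x0 s i.+1).
Proof. by case: s => //= x t it; rewrite (nth_pairmap x0). Qed.

Lemma break_seq_rcons x s z :
  break_seq (rcons (x :: s) z) = rcons (break_seq (x :: s)) (g (last x s) z).
Proof. by rewrite /= -!cats1 pairmap_cat. Qed.

Lemma breaks_rcons x s z :
  breaks (rcons (x :: s) z) = breaks (x :: s) + g (last x s) z.
Proof. by rewrite /breaks break_seq_rcons -cats1 count_cat /= addn0. Qed.

Lemma ends_in_break_rcons x s z :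
  ends_in_break (rcons (x :: s) z) = g (last x s) z.
Proof. by rewrite /ends_in_break break_seq_rcons last_rcons. Qed.

Lemma breaks_cons x s :
  breaks (x :: s) = (if s is z :: _ then g x z else false) + breaks s.
Proof. by case: s. Qed.

Lemma breaks_cat x s1 s2 :
  breaks (x :: s1 ++ s2) = breaks (x :: s1) + breaks (last x s1 :: s2).
Proof. by rewrite /breaks /= pairmap_cat count_cat. Qed.

Hypothesis gsym : symmetric g.

Lemma breaks_rev s : breaks (rev s) = breaks s.
Proof.
elim: s => [|x s IHs] //; case/lastP: s IHs => [|s y] // IHs.
rewrite rev_cons rev_rcons breaks_rcons -rev_rcons IHs breaks_cons addnC gsym.
by case: s {IHs} => //= z s; rewrite rev_cons last_rcons.
Qed.

Lemma breaks_cons_rev a s z :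
  breaks (a :: rev (rcons s z)) = g a z + breaks (rcons s z).
Proof. by rewrite rev_rcons breaks_cons -rev_rcons breaks_rev. Qed.

Lemma breaks_rev_drop y t i : i < size t -> ~~ g (nth y (y :: t) i) (last y t) ->
  breaks (y :: take i t ++ rev (drop i t)) <= breaks (y :: t).
Proof.
move=> it.
have -> : last y t = last (nth y t i) (drop i.+1 t).
  by rewrite -[t in LHS](cat_take_drop i) last_cat (drop_nth y it).
have -> : nth y (y :: t) i = last y (take i t).
  by case: i it => [|k] //= it; rewrite (last_nth y) size_takel ?(ltnW it) //= nth_take.
move=> na; rewrite -[in X in _ <= X](cat_take_drop i t) !breaks_cat leq_add2l.
rewrite (drop_nth y it) [nth y t i :: _ in X in X <= _]lastI breaks_cons_rev.
by rewrite (negbTE na) -lastI [in X in _ <= X]breaks_cons leq_addl.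
Qed.

(* The step (P_i, P_(i+1)) is replaced by (P_i, x), and P_(i+1) becomes the end. *)
Lemma extend_reversing_tail y t (i : 'I_(size t)) r :
  uniq (y :: t) -> r \notin y :: t ->
  ~~ g (nth y (y :: t) i) (last y t) -> ~~ g (nth y t i) r ->
  exists P, [/\ uniq P, size P = (size t).+2,
    breaks P <= breaks (y :: t) & ~~ ends_in_break P].
Proof.
move=> Pu rP nax nbr; set Q := y :: take i t ++ rev (drop i t).
have QP : perm_eq Q (y :: t).
  by rewrite perm_cons -[t in perm_eq _ t](cat_take_drop i) perm_cat2l perm_rev.
have lQ : last y (take i t ++ rev (drop i t)) = nth y t i.
  by rewrite last_cat (drop_nth y (ltn_ord i)) rev_cons last_rcons.
exists (rcons Q r); rewrite rcons_uniq (perm_mem QP) rP (perm_uniq QP) Pu.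
rewrite size_rcons (perm_size QP) breaks_rcons ends_in_break_rcons lQ (negbTE nbr).
by rewrite addn0 breaks_rev_drop.
Qed.
End Breaks.

Section Extension.
Variables (V : finType) (g : rel V) (D : nat).
Hypotheses (gsym : symmetric g) (girr : irreflexive g).
Hypothesis gdeg : forall v, #|[set u | g v u]| <= D.

Lemma card_adj_add_nonadj v :
  #|[set u | g v u]| + #|[set u | (u != v) && ~~ g v u]| = #|V|.-1.
Proof.
rewrite -(cardsC1 v) -(cardsID [set u | g v u] [set~ v]); congr (_ + _).
  by apply: eq_card => u; rewrite !inE; case: eqP => // ->; rewrite girr.
by apply: eq_card => u; rewrite !inE andbC.
Qed.

Lemma card_notin_uniq (s : seq V) :
  uniq s -> #|[set r | r \notin s]| = #|V| - size s.
Proof.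
move=> su; rewrite -(card_uniqP su) -(cardsC [set r in s]) [#|[set r in s]|]cardsE addKn.
by apply: eq_card => r; rewrite !inE.
Qed.

Section Stuck.
Variables (y : V) (t : seq V).
Hypothesis Pu : uniq (y :: t).

Definition nonadj_pos := [set i : 'I_(size t) | ~~ g (nth y (y :: t) i) (last y t)].
Definition nonadj_succ := [set nth y t i | i : 'I_(size t) in nonadj_pos].

Lemma card_nonadj_last : (forall r, r \notin y :: t -> g (last y t) r) ->
  #|[set u | (u != last y t) && ~~ g (last y t) u]| <= #|nonadj_pos|.
Proof.
move=> hx; apply: leq_trans (leq_imset_card (fun i : 'I_(size t) => nth y (y :: t) i) _).
apply/subset_leq_card/subsetP => u; rewrite inE => /andP[ux nxu].
have uP : u \in y :: t by apply: contraT => /hx; rewrite (negbTE nxu).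
have iu : index u (y :: t) < size t.
  have : index u (y :: t) <= size t by rewrite -ltnS index_mem.
  rewrite leq_eqVlt => /orP[/eqP iu|//].
  by move: ux; rewrite -(nth_index y uP) iu -(last_nth y) eqxx.
apply/imsetP; exists (Ordinal iu); last by rewrite /= nth_index.
by rewrite inE /= nth_index // gsym.
Qed.

Lemma card_nonadj_succ : #|nonadj_succ| = #|nonadj_pos|.
Proof.
apply: card_imset => i j /eqP; move: Pu => /andP[_ tu].
by rewrite nth_uniq // => /eqP /val_inj.
Qed.

Lemma head_notin_succ : y \notin nonadj_succ.
Proof. by apply/imsetP => -[i _ yi]; move: Pu => /andP[+ _]; rewrite yi mem_nth. Qed.

Lemma last_in_succ : t != [::] ->
  (last y t \in nonadj_succ) = ~~ ends_in_break g (y :: t).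
Proof.
move=> t0; have kt : (size t).-1 < size t by rewrite prednK ?lt0n ?size_eq0.
have -> : ends_in_break g (y :: t) = g (nth y (y :: t) (size t).-1) (last y t).
  rewrite /ends_in_break -(nth_last false) size_break_seq (nth_break_seq g y) /=.
    by rewrite nth_last.
  by rewrite ltnS.
rewrite -[in LHS](nth_last y) /nonadj_succ; apply/imsetP/idP => [[i iI /eqP]|nb].
  move: Pu => /andP[_ tu]; rewrite nth_uniq // => /eqP ki.
  by move: iI; rewrite inE ki.
by exists (Ordinal kt); rewrite ?inE.
Qed.

Lemma card_head_last_succ :
  1 + #|nonadj_succ| + ends_in_break g (y :: t) <= #|y |: (last y t |: nonadj_succ)|.
Proof.
have [t0|t0] := eqVneq t [::].
  have S0 : #|nonadj_pos| = 0.
    apply/eqP; rewrite cards_eq0; apply/eqP/setP => -[i ilt].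
    by exfalso; move: ilt; rewrite t0.
  rewrite card_nonadj_succ S0 t0 /ends_in_break /=.
  by apply/card_gt0P; exists y; exact: setU11.
have yx : y != last y t.
  have xt : last y t \in t by rewrite -nth_last mem_nth // prednK ?lt0n ?size_eq0.
  by move: Pu => /andP[yt _]; apply: contraNneq yt => ->.
rewrite cardsU1 !inE negb_or yx head_notin_succ cardsU1 (last_in_succ t0) negbK.
lia.
Qed.

Lemma stuck_bounds m r0 : #|[set r | r \notin y :: t]| = m.+1 -> r0 \notin y :: t ->
  (forall r, r \notin y :: t -> g y r) ->
  (forall r, r \notin y :: t -> g (last y t) r) ->
  (forall i r, i \in nonadj_pos -> r \notin y :: t -> g (nth y t i) r) ->
  m.+1 <= D /\ #|V| + ends_in_break g (y :: t) <= 2 * D.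
Proof.
move=> cR r0R hy hx hs; split.
  rewrite -cR; apply: leq_trans (gdeg (last y t)).
  by apply/subset_leq_card/subsetP => r; rewrite !inE; exact: hx.
have W : #|y |: (last y t |: nonadj_succ)| <= D.
  apply: leq_trans (gdeg r0); apply/subset_leq_card/subsetP => u.
  rewrite !inE gsym => /or3P[/eqP->|/eqP->|/imsetP[i iI ->]]; [exact: hy|exact: hx|].
  exact: hs.
(* r0 sees y, the last vertex x and the successor of each non-neighbour of x. *)
have := card_adj_add_nonadj (last y t); have := gdeg (last y t).
have := card_nonadj_last hx; have := card_head_last_succ.
rewrite card_nonadj_succ; lia.
Qed.

End Stuck.

Lemma extend_ordering y t m :
  uniq (y :: t) -> #|[set r | r \notin y :: t]| = m.+1 ->
  exists P, [/\ uniq P, size P = (size t).+2 &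
    (breaks g P <= breaks g (y :: t) /\ ends_in_break g P <= ends_in_break g (y :: t))
    \/ [/\ breaks g P = (breaks g (y :: t)).+1, ends_in_break g P,
          m.+1 <= D & #|V| + ends_in_break g (y :: t) <= 2 * D]].
Proof.
move=> Pu cR.
case: (boolP [exists r, (r \notin y :: t) && ~~ g (last y t) r]).
  move=> /existsP[r /andP[rP nxr]]; exists (rcons (y :: t) r).
  rewrite rcons_uniq rP size_rcons; split=> //; left.
  by rewrite breaks_rcons ends_in_break_rcons (negbTE nxr) addn0.
move=> /existsPn nA; have hx r : r \notin y :: t -> g (last y t) r.
  by move=> rP; move: (nA r); rewrite rP negbK.
case: (boolP [exists r, (r \notin y :: t) && ~~ g y r]).
  move=> /existsP[r /andP[rP nyr]]; exists (r :: y :: t).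
  rewrite /= -/(uniq (y :: t)) Pu; move: rP; rewrite inE negb_or => /andP[/negbTE ry rt].
  rewrite ry rt; split=> //; left.
  by rewrite /ends_in_break /= !breaks_cons gsym (negbTE nyr).
move=> /existsPn nB; have hy r : r \notin y :: t -> g y r.
  by move=> rP; move: (nB r); rewrite rP negbK.
case: (boolP [exists i : 'I_(size t), [exists r,
  [&& ~~ g (nth y (y :: t) i) (last y t), r \notin y :: t & ~~ g (nth y t i) r]]]).
  move=> /existsP[i /existsP[r /and3P[nax rP nbr]]].
  have [P [Pu' sz bP eP]] := extend_reversing_tail gsym Pu rP nax nbr.
  by exists P; split=> //; left; rewrite bP (negbTE eP).
move=> /existsPn nC; have hs i r : i \in nonadj_pos y t -> r \notin y :: t -> g (nth y t i) r.
  rewrite /nonadj_pos inE => nax rP; move: (nC i); rewrite negb_exists => /forallP/(_ r).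
  by rewrite nax rP negbK.
have [r0 r0R] : exists r0, r0 \in [set r | r \notin y :: t].
  by apply/card_gt0P; rewrite cR.
rewrite inE in r0R; have [mD nD] := stuck_bounds Pu cR r0R hy hx hs.
exists (rcons (y :: t) r0).
rewrite rcons_uniq r0R Pu size_rcons; split=> //; right.
by rewrite breaks_rcons ends_in_break_rcons hx // addn1.
Qed.

Lemma exists_ordering_breaks_le (h : nat -> bool -> nat) :
  (forall m (b b' : bool), b' <= b -> h m b' <= h m.+1 b) ->
  (forall m (b : bool), m.+1 <= D -> #|V| + b <= 2 * D -> 1 + h m true <= h m.+1 b) ->
  forall m y t, uniq (y :: t) -> (size t).+1 + m = #|V| ->
  exists s, [/\ uniq s, size s = #|V| &
    breaks g s <= breaks g (y :: t) + h m (ends_in_break g (y :: t))].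
Proof.
move=> h_mono h_stuck; elim=> [|m IHm] y t Pu sz.
  by exists (y :: t); rewrite -sz addn0 leq_addr.
have cR : #|[set r | r \notin y :: t]| = m.+1.
  by rewrite card_notin_uniq // -sz /=; lia.
have [[|z P] [Pu' szP cost]] := extend_ordering Pu cR; first by [].
have [|s [su ss bs]] := IHm z P Pu'; first by move: szP sz => /= [->]; lia.
exists s; split=> //; apply: leq_trans bs _.
case: cost => [[bP eP]|[bP -> mD nD]]; first by rewrite leq_add // h_mono.
by rewrite bP -addn1 -addnA leq_add2l h_stuck.
Qed.
End Extension.

(* A bound on the breaks still to be created when m vertices remain outside the
   path and b records whether it ends in a break, for n vertices and degree D:
   when n = 2D a break is never forced right after another one. *)
Definition potential (n D m : nat) (b : bool) : nat :=
  if 2 * D < n then 0 else minn (m - b * (n == 2 * D)) (D - (n == 2 * D)).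

Lemma potential_mono n D m (b b' : bool) :
  b' <= b -> potential n D m b' <= potential n D m.+1 b.
Proof.
rewrite /potential; case: ifP => // _.
by case: (n == 2 * D); case: b b' => [] [] //=; lia.
Qed.

Lemma potential_stuck n D m (b : bool) : 2 <= D -> m.+1 <= D -> n + b <= 2 * D ->
  1 + potential n D m true <= potential n D m.+1 b.
Proof.
rewrite /potential => D2 mD nD; rewrite ltnNge (leq_trans (leq_addr _ _) nD) /=.
by case: eqP => [e|_]; case: b nD => /= nD; lia.
Qed.

Lemma potential_final n D : 2 <= D -> n <= D * D + 1 ->
  n.-1 + potential n D n.-1 false <= D ^ 2.
Proof.
rewrite /potential mulnn => D2 nM; case: ltnP => small; first lia.
have : 3 * D <= D * D + 2 by nia.
by case: eqP => /=; lia.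
Qed.

Section Colouring.
Variables (V : finType) (g : rel V) (s : seq V).
Hypotheses (su : uniq s) (ss : size s = #|V|).

Definition label i := i + count id (take i (break_seq g s)).
Definition colour v := label (index v s).

Lemma mem_ordering v : v \in s.
Proof.
have : #|s| = #|V| by rewrite (card_uniqP su) ss.
by move/subset_cardP => /(_ (subset_predT _)) ->.
Qed.

Lemma label_succ i : i.+1 < size s ->
  label i.+1 = (label i).+1 + nth false (break_seq g s) i.
Proof.
move=> ilt; have ib : i < size (break_seq g s).
  by rewrite size_break_seq -ltnS (ltn_predK ilt).
by rewrite /label (take_nth false ib) -cats1 count_cat /= addn0 addnA addSn.
Qed.

Lemma label_addn i k : i + k < size s -> label i + k <= label (i + k).
Proof.
elim: k => [|k IHk] ik; first by rewrite !addn0.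
have lt : (i + k).+1 < size s by rewrite -addnS.
rewrite !addnS (label_succ lt).
by have := IHk (ltnW lt); lia.
Qed.

Lemma label_lt i j : i < j -> j < size s -> label i < label j.
Proof.
move=> ij js; have := @label_addn i (j - i); rewrite subnKC ?(ltnW ij) //.
by move=> /(_ js); lia.
Qed.

Lemma index_ordering_lt v : index v s < size s.
Proof. by rewrite index_mem mem_ordering. Qed.

Lemma colour_inj : injective colour.
Proof.
move=> u v; rewrite /colour => e.
have ei : index u s = index v s.
  case: (ltngtP (index u s) (index v s)) => [lt|lt|//].
  - by have := label_lt lt (index_ordering_lt v); rewrite e ltnn.
  - by have := label_lt lt (index_ordering_lt u); rewrite e ltnn.
by rewrite -(nth_index u (mem_ordering u)) ei nth_index ?mem_ordering.
Qed.

Hypothesis gsym : symmetric g.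

Lemma colour_adj_gap u v : u != v -> g u v ->
  (colour u + 2 <= colour v) || (colour v + 2 <= colour u).
Proof.
wlog lt : u v / index u s < index v s => [W uv guv|uv guv].
  case: (ltngtP (index u s) (index v s)) => [lt|lt|e]; first exact: W.
    by rewrite orbC W // 1?eq_sym // gsym.
  by move: uv; rewrite -(colour_inj (congr1 label e)) eqxx.
rewrite /colour; have vs := index_ordering_lt v.
case: (ltnP (index u s).+1 (index v s)) => [ij|ji].
  have := label_lt ij vs; have := label_lt (ltnSn _) (ltn_trans ij vs); lia.
have e : index v s = (index u s).+1 by apply/eqP; rewrite eqn_leq ji lt.
rewrite e label_succ -?e // (nth_break_seq g u) -?e //.
by rewrite !nth_index ?mem_ordering // guv; lia.
Qed.

Lemma span_colour : span colour <= #|V|.-1 + breaks g s.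
Proof.
apply: leq_trans (leq_subr _ _) _; apply/bigmax_leqP => v _.
have -> : #|V|.-1 + breaks g s = label (size s).-1.
  by rewrite /label take_oversize ?size_break_seq // ss.
have vs := index_ordering_lt v.
have := @label_addn (index v s) ((size s).-1 - index v s).
rewrite /colour subnKC; [lia | by rewrite -ltnS (ltn_predK vs)].
Qed.
End Colouring.

Lemma card_bigcup_le (T I : finType) (P : pred I) (F : I -> {set T}) :
  #|\bigcup_(i | P i) F i| <= \sum_(i | P i) #|F i|.
Proof.
elim/big_ind2: _ => [|A1 n1 A2 n2 le1 le2|//]; first by rewrite cards0.
exact: leq_trans (leq_card_setU _ _) (leq_add le1 le2).
Qed.

Section Hypergraph.
Variables (V : finType) (E : {set {set V}}).

Lemma adj_sym : symmetric (adj E).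
Proof.
move=> u v; rewrite /adj eq_sym; congr (_ && _).
by apply/existsP/existsP => -[e /and3P[eE ue ve]]; exists e; rewrite eE ue ve.
Qed.

Lemma adj_irr : irreflexive (adj E).
Proof. by move=> u; rewrite /adj eqxx. Qed.

Lemma colour_L21 s : uniq s -> size s = #|V| -> L21_colouring E (colour (adj E) s).
Proof.
move=> su ss; split=> [u v e eE ue ve uv | u v ? ? _ _ _ _ uv _].
  apply: colour_adj_gap => //; first exact: adj_sym.
  by rewrite /adj uv; apply/existsP; exists e; rewrite eE ue ve.
by apply: contra_neq uv; apply: colour_inj.
Qed.

Lemma card_adj_le r : uniform E r ->
  forall v, #|[set u | adj E v u]| <= (r - 1) * max_degree E.
Proof.
move=> Er v.
apply: (@leq_trans #|\bigcup_(e in [set e in E | v \in e]) (e :\ v)|).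
  apply/subset_leq_card/subsetP => u.
  rewrite inE /adj => /andP[vu /existsP[e /and3P[eE ve ue]]].
  by apply/bigcupP; exists e; rewrite !inE ?eE ?ve // ue eq_sym vu.
apply: leq_trans (card_bigcup_le _ _) _.
rewrite (eq_bigr (fun _ => r - 1)); last first.
  move=> e; rewrite inE => /andP[eE ve].
  by have := cardsD1 v e; rewrite ve Er //; lia.
by rewrite sum_nat_const mulnC leq_mul2l (@leq_bigmax _ (degree E) v) orbT.
Qed.

Lemma card_le_moore D : (forall v, #|[set u | adj E v u]| <= D) ->
  (forall u v, dist_le E 2 u v) -> #|V| <= D * D + 1.
Proof.
move=> deg diam; have [v0 _|V0] := pickP (@predT V); last by rewrite eq_card0.
pose N w := [set u | adj E w u].
have cover : [set: V] \subset v0 |: \bigcup_(w in N v0) (w |: (N w :\ v0)).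
  apply/subsetP => u _; have [p [sp pp <-]] := diam v0 u.
  case: p sp pp => [|w [|u' [|? ?]]] //= _; first by rewrite setU11.
    rewrite andbT => a; apply/setU1P; right; apply/bigcupP; exists w.
      by rewrite inE.
    by rewrite setU11.
  move=> /and3P[a b _]; have [->|ne] := eqVneq u' v0; first by rewrite setU11.
  apply/setU1P; right; apply/bigcupP; exists w; first by rewrite inE.
  by rewrite !inE ne b orbT.
rewrite -cardsT; apply: leq_trans (subset_leq_card cover) _; rewrite cardsU1 addnC.
rewrite leq_add ?leq_b1 //; apply: leq_trans (card_bigcup_le _ _) _.
apply: (@leq_trans (\sum_(w in N v0) D)); last first.
  by rewrite sum_nat_const leq_mul2r deg orbT.
apply: leq_sum => w; rewrite inE => a.
rewrite cardsU1; have := cardsD1 v0 (N w); rewrite inE adj_sym a.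
have := deg w; rewrite -/(N w); case: (w \notin _) => /=; lia.
Qed.

Lemma diameter2_degree_ge2 D : (forall v, #|[set u | adj E v u]| <= D) ->
  diameter_eq E 2 -> 2 <= D.
Proof.
move=> deg [_ [u [v [[p [sp pp lp]] [nd _]]]]].
case: p sp pp lp => [|w [|v' [|? ?]]] //= _.
- by move=> _ e; case: nd; exists [::].
- by move=> pp e; case: nd; exists [:: w].
move=> /and3P[a b _] e; subst v'.
have uv : u != v by apply: contra_not_neq nd => ->; exists [::].
apply: leq_trans (deg w); have := cards2 u v; rewrite uv => <-.
apply/subset_leq_card/subsetP.
by move=> z; rewrite !inE => /orP[] /eqP ->; rewrite // adj_sym.
Qed.
End Hypergraph.

Theorem mainTheorem9 (V : finType) (E : {set {set V}}) (r : nat) :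
  uniform E r -> diameter_eq E 2 ->
  lambda_le E (((r - 1) * max_degree E) ^ 2).
Proof.
move=> Er dm; set D := (r - 1) * max_degree E.
have deg := card_adj_le Er; have D2 := diameter2_degree_ge2 deg dm.
have nM := card_le_moore deg dm.1.
have [u0 _] := dm.2.
have [|s [su ss bs]] := exists_ordering_breaks_le (@adj_sym V E) (@adj_irr V E) deg
  (@potential_mono #|V| D) (fun m b => @potential_stuck #|V| D m b D2)
  (m := #|V|.-1) (y := u0) (t := [::]) isT.
  by rewrite add1n prednK //; apply/card_gt0P; exists u0.
exists (colour (adj E) s); split; first exact: colour_L21.
apply: leq_trans (span_colour (adj E) su ss) _.
by apply: leq_trans (potential_final D2 nM); rewrite leq_add2l.
Qed.
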